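(* Let $\alpha>0$, $V=(V_1,\dots,V_n)\in[0,M]^n$ and $f\in\mathcal{H}_\alpha(M)$, and set $x_i=i/n$. Let $W_i=V_{i+1}+V_i$ and $\delta_i=f(x_{i+1})-f(x_i)$ for $1\le i\le n-1$, with averages $\bar W_n=\frac1{n-1}\sum_{i=1}^{n-1}W_i$, $\overline{\delta^2_n}=\frac1{n-1}\sum_{i=1}^{n-1}\delta_i^2$; let $\tilde W_i=V_{i+2}+V_i$ and $\tilde\delta_i=f(x_{i+2})-f(x_i)$ for $1\le i\le n-2$. Define $$T=\frac1n\sum_{i=1}^{n-1}(W_i+\delta_i^2-\bar W_n-\overline{\delta^2_n})^2,$$ $$\tilde T_1=\frac1n\sum_{i=1}^{n-3}\big(W_{i+1}+\delta_{i+1}^2-V_i-V_{i+3}-(f(x_{i+3})-f(x_i))^2\big)^2,$$ $$\tilde T_2=\frac1n\sum_{i=1}^{n-3}(\tilde W_{i+1}+\tilde\delta_{i+1}^2-\tilde W_i-\tilde\delta_i^2)^2 .$$ Then, with $\bar V_n=\frac1n\sum_{i=1}^nV_i$, $$\frac1n\sum_{i=1}^n(V_i-\bar V_n)^2\lesssim n^{-1}+n^{-4(\alpha\wedge1)}+T+\tilde T_1+\tilde T_2,$$ with an implicit constant not depending on $n,f,V$.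
   Context: $\mathcal{H}_\alpha(M)$: functions $g:[0,1]\to\mathbb{R}$ with $|g^{(\lfloor\alpha\rfloor)}(x)-g^{(\lfloor\alpha\rfloor)}(y)|\le M|x-y|^{\alpha-\lfloor\alpha\rfloor}$ for all $x,y$ and $\|g^{(k)}\|_\infty\le M$ for $k=0,\dots,\lfloor\alpha\rfloor$; $M$ is a fixed sufficiently large constant. $a\lesssim b$ means $a\le Cb$ with $C$ depending only on $\alpha,M$. *)

From Stdlib Require Import Reals Lra List.
From Coquelicot Require Import Coquelicot.
Open Scope R_scope.

(* sumR lo hi g = sum_{i = lo}^{hi} g i  (empty, i.e. 0, when hi < lo) *)
Definition sumR (lo hi : nat) (g : nat -> R) : R :=
  fold_right Rplus 0 (map g (seq lo (S hi - lo))).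

Definition I01 (x : R) : Prop := 0 <= x <= 1.

(* g' is the derivative of g on [0,1], taken within [0,1]
   (one-sided at the endpoints). *)
Definition is_deriv_on01 (g g' : R -> R) : Prop :=
  forall x, I01 x ->
    filterlim (fun y => (g y - g x) / (y - x))
      (within (fun y => I01 y /\ y <> x) (locally x)) (locally (g' x)).

Definition floorN (alpha : R) : nat := Z.to_nat (Int_part alpha).

(* Hoelder class H_alpha(M) on [0,1]: with m = floor alpha, the derivatives
   g 0 = f, g 1 = f', ..., g m = f^(m) exist on [0,1], are bounded by M,
   and f^(m) is (alpha - m)-Hoelder with constant M. *)
Definition Holder (alpha M : R) (f : R -> R) : Prop :=
  exists g : nat -> R -> R,
    (forall x, I01 x -> g O x = f x) /\
    (forall k, (k < floorN alpha)%nat -> is_deriv_on01 (g k) (g (S k))) /\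
    (forall k x, (k <= floorN alpha)%nat -> I01 x -> Rabs (g k x) <= M) /\
    (forall x y, I01 x -> I01 y ->
       Rabs (g (floorN alpha) x - g (floorN alpha) y)
         <= M * Rpower (Rabs (x - y)) (alpha - INR (floorN alpha))).

Section Quantities.
Variables (n : nat) (V : nat -> R) (f : R -> R).

Definition xg (i : nat) : R := INR i / INR n.
Definition W (i : nat) : R := V (S i) + V i.
Definition dl (i : nat) : R := f (xg (S i)) - f (xg i).
Definition Wt (i : nat) : R := V (S (S i)) + V i.
Definition dlt (i : nat) : R := f (xg (S (S i))) - f (xg i).

Definition Wbar : R := / INR (n - 1) * sumR 1 (n - 1) W.
Definition d2bar : R := / INR (n - 1) * sumR 1 (n - 1) (fun i => (dl i) ^ 2).

Definition Tstat : R :=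
  / INR n * sumR 1 (n - 1) (fun i => (W i + (dl i) ^ 2 - Wbar - d2bar) ^ 2).

Definition T1stat : R :=
  / INR n * sumR 1 (n - 3) (fun i =>
    (W (S i) + (dl (S i)) ^ 2 - V i - V (i + 3)%nat
       - (f (xg (i + 3)%nat) - f (xg i)) ^ 2) ^ 2).

Definition T2stat : R :=
  / INR n * sumR 1 (n - 3) (fun i =>
    (Wt (S i) + (dlt (S i)) ^ 2 - Wt i - (dlt i) ^ 2) ^ 2).

Definition Vbar : R := / INR n * sumR 1 n V.

Definition Vvar : R := / INR n * sumR 1 n (fun i => (V i - Vbar) ^ 2).

End Quantities.

(* Write D_i = V_(i+1) - V_i.  Adding the i-th summands of T1 and T2 cancels
   everything but 2 D_i and four squared increments of f over at most three
   grid steps, each O(n^(-2 min(alpha,1))) by the Hoelder condition; hence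
   sum D_i^2 <~ n (T1 + T2) + n^(1 - 4 min(alpha,1)).  With c = Wbar + d2bar,
   the i-th summand of T is 2 V_i - c + D_i + delta_i^2, so
   sum (2 V_i - c)^2 <~ n T + sum D_i^2 + n^(1 - 4 min(alpha,1)); finally the
   empirical mean minimises a |-> sum (V_i - a)^2, so taking a = c / 2 bounds
   n times the variance, up to the O(1) boundary terms. *)

From Stdlib Require Import Reals Lra Lia List.
From Coquelicot Require Import Coquelicot.
Open Scope R_scope.

Lemma sumR_le lo hi g h :
  (forall i, (lo <= i <= hi)%nat -> g i <= h i) -> sumR lo hi g <= sumR lo hi h.
Proof.
  intros H; unfold sumR.
  assert (Hl : forall i, In i (seq lo (S hi - lo)) -> g i <= h i)
    by (intros i Hi; apply in_seq in Hi; apply H; lia).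
  clear H; induction (seq lo (S hi - lo)) as [| a l IH]; simpl; [lra |].
  pose proof (Hl a (or_introl eq_refl)).
  pose proof (IH (fun i Hi => Hl i (or_intror Hi))).
  lra.
Qed.

Lemma sumR_ext lo hi g h :
  (forall i, (lo <= i <= hi)%nat -> g i = h i) -> sumR lo hi g = sumR lo hi h.
Proof.
  intros H; apply Rle_antisym; apply sumR_le; intros i Hi; rewrite (H i Hi); lra.
Qed.

Lemma sumR_plus lo hi g h :
  sumR lo hi (fun i => g i + h i) = sumR lo hi g + sumR lo hi h.
Proof.
  unfold sumR; induction (seq lo (S hi - lo)); simpl; [lra | rewrite IHl; lra].
Qed.

Lemma sumR_mult_l lo hi c g : sumR lo hi (fun i => c * g i) = c * sumR lo hi g.
Proof.
  unfold sumR; induction (seq lo (S hi - lo)); simpl; [lra | rewrite IHl; lra].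
Qed.

Lemma sumR_const lo hi c : sumR lo hi (fun _ => c) = INR (S hi - lo) * c.
Proof.
  unfold sumR; set (l := seq lo (S hi - lo)).
  replace (S hi - lo)%nat with (length l) by apply length_seq.
  clearbody l; induction l as [| a l IH]; [simpl; lra |].
  cbn [map fold_right length]; rewrite S_INR, IH; lra.
Qed.

Lemma sumR_Sm lo hi g :
  (lo <= S hi)%nat -> sumR lo (S hi) g = sumR lo hi g + g (S hi).
Proof.
  intros H; unfold sumR.
  replace (S (S hi) - lo)%nat with (S (S hi - lo)) by lia.
  rewrite seq_S, map_app, fold_right_app.
  replace (lo + (S hi - lo))%nat with (S hi) by lia.
  induction (map g (seq lo (S hi - lo))); simpl in *; lra.
Qed.

Lemma sumR_nonneg lo hi g :
  (forall i, (lo <= i <= hi)%nat -> 0 <= g i) -> 0 <= sumR lo hi g.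
Proof.
  intros H; replace 0 with (sumR lo hi (fun _ => 0)).
  - now apply sumR_le.
  - rewrite sumR_const; lra.
Qed.

Lemma sumR_le_lincomb lo hi g h1 h2 a b c :
  (forall i, (lo <= i <= hi)%nat -> g i <= a * h1 i + b * h2 i + c) ->
  sumR lo hi g <= a * sumR lo hi h1 + b * sumR lo hi h2 + INR (S hi - lo) * c.
Proof.
  intros H; rewrite <- sumR_const, <- !sumR_mult_l, <- !sumR_plus.
  now apply sumR_le.
Qed.

Lemma is_deriv_on01_eps g g' x : is_deriv_on01 g g' -> I01 x ->
  forall eps, 0 < eps -> exists d, 0 < d /\
    forall y, I01 y -> y <> x -> Rabs (y - x) < d ->
      Rabs ((g y - g x) / (y - x) - g' x) < eps.
Proof.
  intros H Hx eps Heps.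
  destruct (H x Hx (ball (g' x) eps) (locally_ball _ (mkposreal _ Heps))) as [d Hd].
  exists d; split; [apply cond_pos |].
  intros y Hy Hyx Hyd; exact (Hd y Hyd (conj Hy Hyx)).
Qed.

Lemma is_deriv_on01_is_derive g g' x :
  is_deriv_on01 g g' -> 0 < x < 1 -> is_derive g x (g' x).
Proof.
  intros H Hx; apply is_derive_Reals; intros eps Heps.
  destruct (is_deriv_on01_eps g g' x H ltac:(unfold I01; lra) eps Heps) as [d [Hd Hq]].
  assert (Hpos : 0 < Rmin d (Rmin x (1 - x))) by (repeat apply Rmin_pos; lra).
  exists (mkposreal _ Hpos); intros h Hh0 Hh; simpl in Hh.
  pose proof (Rmin_l d (Rmin x (1 - x))); pose proof (Rmin_r d (Rmin x (1 - x))).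
  pose proof (Rmin_l x (1 - x)); pose proof (Rmin_r x (1 - x)).
  pose proof (Rabs_def2 h (Rmin x (1 - x)) ltac:(lra)).
  specialize (Hq (x + h)); replace (x + h - x) with h in Hq by ring.
  apply Hq; [unfold I01; lra | lra | lra].
Qed.

Lemma is_deriv_on01_local_lipschitz g g' x : is_deriv_on01 g g' -> I01 x ->
  exists d, 0 < d /\ forall y, I01 y -> Rabs (y - x) < d ->
    Rabs (g y - g x) <= (Rabs (g' x) + 1) * Rabs (y - x).
Proof.
  intros H Hx.
  destruct (is_deriv_on01_eps g g' x H Hx 1 Rlt_0_1) as [d [Hd Hq]].
  exists d; split; [exact Hd |]; intros y Hy Hyd.
  destruct (Req_dec y x) as [-> | Hyx].
  { rewrite !Rminus_diag, Rabs_R0; lra. }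
  specialize (Hq y Hy Hyx Hyd).
  replace (g y - g x) with ((g y - g x) / (y - x) * (y - x)) by (field; lra).
  rewrite Rabs_mult; apply Rmult_le_compat_r; [apply Rabs_pos |].
  pose proof (Rabs_triang_inv ((g y - g x) / (y - x)) (g' x)); lra.
Qed.

Section Lipschitz.
Variables (g g' : R -> R) (M : R).
Hypothesis Hderiv : is_deriv_on01 g g'.
Hypothesis Hbound : forall x, I01 x -> Rabs (g' x) <= M.

Lemma is_deriv_on01_lipschitz_interior a b :
  0 < a <= b -> b < 1 -> Rabs (g b - g a) <= M * (b - a).
Proof.
  intros Hab Hb.
  destruct (MVT_gen g a b g') as [c [Hc Heq]]; rewrite ?Rmin_left, ?Rmax_right in * by lra.
  - intros x Hx; apply is_deriv_on01_is_derive; [exact Hderiv | lra].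
  - intros x Hx; apply derivable_continuous_pt; exists (g' x).
    apply is_derive_Reals, is_deriv_on01_is_derive; [exact Hderiv | lra].
  - rewrite Heq, Rabs_mult, (Rabs_right (b - a)) by lra.
    apply Rmult_le_compat_r; [lra | apply Hbound; unfold I01; lra].
Qed.

(* The derivative is only one-sided at [1], so the mean value theorem cannot
   reach [b = 1]; the local estimate at [1] covers the last stretch. *)
Lemma is_deriv_on01_lipschitz a b :
  0 < a <= b -> b <= 1 -> Rabs (g b - g a) <= (M + 1) * (b - a).
Proof.
  intros Hab Hb.
  assert (HM : 0 <= M).
  { pose proof (Hbound a ltac:(unfold I01; lra)); pose proof (Rabs_pos (g' a)); lra. }
  destruct (Rlt_or_le b 1) as [Hb1 | Hb1].
  { pose proof (is_deriv_on01_lipschitz_interior a b Hab Hb1); nra. }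
  replace b with 1 by lra.
  destruct (is_deriv_on01_local_lipschitz g g' 1 Hderiv ltac:(unfold I01; lra))
    as [d [Hd Hloc]].
  assert (Hnear : forall y, 0 < y <= 1 -> 1 - y < d ->
    Rabs (g 1 - g y) <= (M + 1) * (1 - y)).
  { intros y Hy Hyd; rewrite Rabs_minus_sym.
    specialize (Hloc y ltac:(unfold I01; lra) ltac:(rewrite Rabs_left1; lra)).
    rewrite (Rabs_left1 (y - 1)) in Hloc by lra.
    pose proof (Hbound 1 ltac:(unfold I01; lra)).
    assert ((Rabs (g' 1) + 1) * (1 - y) <= (M + 1) * (1 - y))
      by (apply Rmult_le_compat_r; lra).
    lra. }
  destruct (Rlt_or_le (1 - a) d) as [Had | Had]; [apply Hnear; lra |].
  pose proof (is_deriv_on01_lipschitz_interior a (1 - d / 2) ltac:(lra) ltac:(lra)).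
  pose proof (Hnear (1 - d / 2) ltac:(lra) ltac:(lra)).
  replace (g 1 - g a) with ((g 1 - g (1 - d / 2)) + (g (1 - d / 2) - g a)) by ring.
  pose proof (Rabs_triang (g 1 - g (1 - d / 2)) (g (1 - d / 2) - g a)); nra.
Qed.

End Lipschitz.

Lemma floorN_eq0 a : 0 < a < 1 -> floorN a = 0%nat.
Proof.
  intros H; unfold floorN, Int_part.
  rewrite <- (tech_up a 1) by (simpl; lra); reflexivity.
Qed.

Lemma floorN_ge1 a : 1 <= a -> (1 <= floorN a)%nat.
Proof.
  intros H; unfold floorN, Int_part; destruct (archimed a) as [Hup _].
  assert (1 < up a)%Z by (apply lt_IZR; simpl; lra); lia.
Qed.

Lemma Holder_increment alpha M f x y : 0 < alpha -> Holder alpha M f ->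
  0 < x < y -> y <= 1 -> Rabs (f y - f x) <= (M + 1) * Rpower (y - x) (Rmin alpha 1).
Proof.
  intros Halpha [g [Hg0 [Hderiv [Hbound Hholder]]]] Hxy Hy.
  assert (Ix : I01 x) by (unfold I01; lra).
  assert (Iy : I01 y) by (unfold I01; lra).
  rewrite <- (Hg0 x Ix), <- (Hg0 y Iy).
  destruct (Rlt_or_le alpha 1) as [Hlt | Hge].
  - rewrite Rmin_left by lra.
    specialize (Hholder y x Iy Ix).
    rewrite floorN_eq0 in Hholder by lra; change (INR 0) with 0 in Hholder.
    rewrite Rminus_0_r, (Rabs_right (y - x)) in Hholder by lra.
    assert (0 < Rpower (y - x) alpha) by apply exp_pos.
    lra.
  - rewrite Rmin_right, Rpower_1 by lra.
    pose proof (floorN_ge1 alpha Hge).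
    apply (is_deriv_on01_lipschitz (g 0%nat) (g 1%nat)); [apply Hderiv; lia | | lra | lra].
    intros; apply Hbound; [lia | assumption].
Qed.

Lemma Rpower_le_of_le_div d k N a : 0 < a <= 1 -> 1 <= k -> 0 < N ->
  0 < d <= k / N -> Rpower d a <= k * Rpower N (- a).
Proof.
  intros Ha Hk HN Hd.
  assert (Hinv : Rpower (/ N) a = Rpower N (- a))
    by (unfold Rpower; rewrite ln_Rinv by lra; f_equal; ring).
  assert (Hk1 : Rpower k a <= k)
    by (rewrite <- (Rpower_1 k) at 2 by lra; apply Rle_Rpower; lra).
  assert (0 < Rpower N (- a)) by apply exp_pos.
  apply Rle_trans with (Rpower (k / N) a); [apply Rle_Rpower_l; lra |].
  unfold Rdiv; rewrite <- Rpower_mult_distr, Hinv by (try apply Rinv_0_lt_compat; lra).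
  apply Rmult_le_compat_r; lra.
Qed.

Lemma xg_increment n i j k : (1 <= i < j)%nat -> (j <= n)%nat -> (j <= i + k)%nat ->
  0 < xg n i < xg n j /\ xg n j <= 1 /\ xg n j - xg n i <= INR k / INR n.
Proof.
  intros Hij Hjn Hjk; unfold xg, Rdiv.
  assert (HN : 0 < / INR n) by (apply Rinv_0_lt_compat, lt_0_INR; lia).
  assert (1 <= INR i) by (apply (le_INR 1); lia).
  assert (INR i < INR j) by (apply lt_INR; lia).
  assert (INR j <= INR n) by (apply le_INR; lia).
  assert (INR j <= INR i + INR k) by (rewrite <- plus_INR; apply le_INR; lia).
  repeat split.
  - nra.
  - apply Rmult_lt_compat_r; lra.
  - rewrite <- (Rinv_r (INR n)) by lra; apply Rmult_le_compat_r; lra.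
  - rewrite <- Rmult_minus_distr_r; apply Rmult_le_compat_r; lra.
Qed.

Lemma Holder_grid_increment alpha M f n i j : 0 < alpha -> 0 <= M -> Holder alpha M f ->
  (1 <= i < j)%nat -> (j <= n)%nat -> (j <= i + 3)%nat ->
  (f (xg n j) - f (xg n i)) ^ 2 <= (3 * (M + 1) * Rpower (INR n) (- Rmin alpha 1)) ^ 2.
Proof.
  intros Halpha HM Hf Hij Hjn Hj3.
  destruct (xg_increment n i j 3 Hij Hjn Hj3) as [Hx [Hy Hstep]].
  replace (INR 3) with 3 in Hstep by (simpl; ring).
  pose proof (Holder_increment alpha M f (xg n i) (xg n j) Halpha Hf Hx Hy).
  assert (Ha : 0 < Rmin alpha 1 <= 1) by (split; [apply Rmin_pos | apply Rmin_r]; lra).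
  pose proof (Rpower_le_of_le_div (xg n j - xg n i) 3 (INR n) (Rmin alpha 1)
    Ha ltac:(lra) ltac:(apply lt_0_INR; lia) ltac:(lra)).
  rewrite <- pow2_abs; apply pow_incr; split; [apply Rabs_pos |].
  assert ((M + 1) * Rpower (xg n j - xg n i) (Rmin alpha 1)
          <= (M + 1) * (3 * Rpower (INR n) (- Rmin alpha 1)))
    by (apply Rmult_le_compat_l; lra).
  lra.
Qed.

Lemma sqr_plus3_le a b c : (a + b + c) ^ 2 <= 3 * (a ^ 2 + b ^ 2 + c ^ 2).
Proof.
  pose proof (pow2_ge_0 (a - b)); pose proof (pow2_ge_0 (b - c));
  pose proof (pow2_ge_0 (a - c)); nra.
Qed.

Lemma inv_INR_sumR_sq_nonneg n lo hi g :
  (1 <= n)%nat -> 0 <= / INR n * sumR lo hi (fun i => g i ^ 2).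
Proof.
  intros Hn; apply Rmult_le_pos.
  - left; apply Rinv_0_lt_compat, lt_0_INR; lia.
  - apply sumR_nonneg; intros; apply pow2_ge_0.
Qed.

Lemma INR_mul_Vvar_le n V c :
  (1 <= n)%nat -> INR n * Vvar n V <= sumR 1 n (fun i => (V i - c) ^ 2).
Proof.
  intros Hn; set (m := Vbar n V).
  assert (HN : 0 < INR n) by (apply lt_0_INR; lia).
  assert (Hsum : sumR 1 n V = INR n * m) by (unfold m, Vbar; field; lra).
  assert (Hsplit : sumR 1 n (fun i => (V i - c) ^ 2)
    = sumR 1 n (fun i => (V i - m) ^ 2) + INR n * (m - c) ^ 2).
  { rewrite (sumR_ext 1 n _ (fun i => ((V i - m) ^ 2 + 2 * (m - c) * V i) + (c ^ 2 - m ^ 2)))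
      by (intros; ring).
    rewrite !sumR_plus, sumR_mult_l, sumR_const, Hsum.
    replace (S n - 1)%nat with n by lia; ring. }
  rewrite Hsplit; unfold Vvar; fold m.
  assert (0 <= INR n * (m - c) ^ 2) by (apply Rmult_le_pos; [lra | apply pow2_ge_0]).
  replace (INR n * (/ INR n * sumR 1 n (fun i => (V i - m) ^ 2)))
    with (sumR 1 n (fun i => (V i - m) ^ 2)) by (field; lra).
  lra.
Qed.

Lemma Vvar_le_sq n V M : (1 <= n)%nat ->
  (forall i, (1 <= i <= n)%nat -> 0 <= V i <= M) -> Vvar n V <= M ^ 2.
Proof.
  intros Hn HV; assert (HN : 0 < INR n) by (apply lt_0_INR; lia).
  apply Rmult_le_reg_l with (INR n); [exact HN |].
  eapply Rle_trans; [apply (INR_mul_Vvar_le n V 0 Hn) |].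
  replace (INR n * M ^ 2) with (INR (S n - 1) * M ^ 2) by (f_equal; f_equal; lia).
  rewrite <- sumR_const; apply sumR_le; intros i Hi.
  pose proof (HV i Hi); nra.
Qed.

Section Variance_bound.

Variables (n : nat) (V : nat -> R) (f : R -> R) (M B : R).

Hypothesis HV : forall i, (1 <= i <= n)%nat -> 0 <= V i <= M.

Hypothesis Hf : forall i j, (1 <= i < j)%nat -> (j <= n)%nat -> (j <= i + 3)%nat ->
  (f (xg n j) - f (xg n i)) ^ 2 <= B.

Definition dV i := V (S i) - V i.

Definition Tres i := W V i + dl n f i ^ 2 - Wbar n V - d2bar n f.

Definition T1res i := W V (S i) + dl n f (S i) ^ 2 - V i - V (i + 3)%nat
  - (f (xg n (i + 3)) - f (xg n i)) ^ 2.

Definition T2res i := Wt V (S i) + dlt n f (S i) ^ 2 - Wt V i - dlt n f i ^ 2.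

Lemma dV_sq_le i : (1 <= i)%nat -> (S i <= n)%nat -> dV i ^ 2 <= M ^ 2.
Proof.
  intros; pose proof (HV i ltac:(lia)); pose proof (HV (S i) ltac:(lia)); unfold dV; nra.
Qed.

(* The [V]-parts of the two residuals add up to [2 dV i]; what remains is a
   signed sum of four squared increments of [f], each in [[0, B]]. *)
Lemma dV_sq_le_residuals i : (1 <= i)%nat -> (i + 3 <= n)%nat ->
  4 * dV i ^ 2 <= 3 * T1res i ^ 2 + 3 * T2res i ^ 2 + 12 * B ^ 2.
Proof.
  intros Hi Hin; set (s j k := (f (xg n k) - f (xg n j)) ^ 2).
  assert (Hs : forall j k, (i <= j < k)%nat -> (k <= i + 3)%nat -> 0 <= s j k <= B)
    by (intros; split; [apply pow2_ge_0 | apply Hf; lia]).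
  set (r := s (S i) (S (S i)) - s i (i + 3)%nat + (s (S i) (i + 3)%nat - s i (S (S i)))).
  assert (Hr : r ^ 2 <= 4 * B ^ 2).
  { pose proof (Hs (S i) (S (S i)) ltac:(lia) ltac:(lia)).
    pose proof (Hs i (i + 3)%nat ltac:(lia) ltac:(lia)).
    pose proof (Hs (S i) (i + 3)%nat ltac:(lia) ltac:(lia)).
    pose proof (Hs i (S (S i)) ltac:(lia) ltac:(lia)).
    unfold r; nra. }
  assert (E : 2 * dV i = T1res i + T2res i + - r).
  { unfold dV, T1res, T2res, r, s, W, Wt, dl, dlt.
    replace (i + 3)%nat with (S (S (S i))) by lia; ring. }
  pose proof (sqr_plus3_le (T1res i) (T2res i) (- r)); rewrite <- E in *; nra.
Qed.

Lemma centred_sq_le_residual i : (1 <= i)%nat -> (S i <= n)%nat ->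
  (2 * V i - (Wbar n V + d2bar n f)) ^ 2 <= 3 * Tres i ^ 2 + 3 * dV i ^ 2 + 3 * B ^ 2.
Proof.
  intros Hi Hin.
  assert (Hd : 0 <= dl n f i ^ 2 <= B)
    by (split; [apply pow2_ge_0 | apply Hf; lia]).
  assert (E : 2 * V i - (Wbar n V + d2bar n f) = Tres i + - dV i + - dl n f i ^ 2)
    by (unfold Tres, dV, W; ring).
  pose proof (sqr_plus3_le (Tres i) (- dV i) (- dl n f i ^ 2)); rewrite E; nra.
Qed.

Lemma sumR_dV_sq_le :
  4 * sumR 1 (n - 3) (fun i => dV i ^ 2)
  <= 3 * sumR 1 (n - 3) (fun i => T1res i ^ 2) + 3 * sumR 1 (n - 3) (fun i => T2res i ^ 2)
     + 12 * INR n * B ^ 2.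
Proof.
  rewrite <- sumR_mult_l; eapply Rle_trans.
  { apply sumR_le_lincomb; intros i Hi; apply dV_sq_le_residuals; lia. }
  assert (INR (S (n - 3) - 1) <= INR n) by (apply le_INR; lia).
  pose proof (pow2_ge_0 B); nra.
Qed.

Lemma sumR_centred_sq_le :
  sumR 1 (n - 1) (fun i => (2 * V i - (Wbar n V + d2bar n f)) ^ 2)
  <= 3 * sumR 1 (n - 1) (fun i => Tres i ^ 2) + 3 * sumR 1 (n - 1) (fun i => dV i ^ 2)
     + 3 * INR n * B ^ 2.
Proof.
  eapply Rle_trans.
  { apply sumR_le_lincomb; intros i Hi; apply centred_sq_le_residual; lia. }
  assert (INR (S (n - 1) - 1) <= INR n) by (apply le_INR; lia).
  pose proof (pow2_ge_0 B); nra.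
Qed.

Lemma sumR_dV_sq_last2 : (3 <= n)%nat ->
  sumR 1 (n - 1) (fun i => dV i ^ 2) <= sumR 1 (n - 3) (fun i => dV i ^ 2) + 2 * M ^ 2.
Proof.
  intros Hn.
  replace (n - 1)%nat with (S (S (n - 3))) by lia.
  rewrite !sumR_Sm by lia.
  pose proof (dV_sq_le (S (n - 3)) ltac:(lia) ltac:(lia)).
  pose proof (dV_sq_le (S (S (n - 3))) ltac:(lia) ltac:(lia)).
  lra.
Qed.

Lemma sumR_centred_sq_last c : (2 <= n)%nat ->
  sumR 1 n (fun i => (2 * V i - c) ^ 2)
  <= 3 * sumR 1 (n - 1) (fun i => (2 * V i - c) ^ 2) + 8 * M ^ 2.
Proof.
  intros Hn.
  replace n with (S (S (n - 2))) at 1 by lia.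
  replace (n - 1)%nat with (S (n - 2)) by lia.
  rewrite !sumR_Sm by lia.
  assert (0 <= sumR 1 (n - 2) (fun i => (2 * V i - c) ^ 2))
    by (apply sumR_nonneg; intros; apply pow2_ge_0).
  pose proof (dV_sq_le (S (n - 2)) ltac:(lia) ltac:(lia)) as Hd; unfold dV in Hd.
  set (a := 2 * V (S (n - 2)) - c) in *; set (d := V (S (S (n - 2))) - V (S (n - 2))) in *.
  replace (2 * V (S (S (n - 2))) - c) with (a + 2 * d) by (unfold a, d; ring).
  pose proof (pow2_ge_0 (a - 2 * d)); nra.
Qed.

Lemma residual_stats_nonneg : (1 <= n)%nat ->
  0 <= Tstat n V f + T1stat n V f + T2stat n V f.
Proof.
  intros Hn.
  pose proof (inv_INR_sumR_sq_nonneg n 1 (n - 1) Tres Hn : 0 <= Tstat n V f).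
  pose proof (inv_INR_sumR_sq_nonneg n 1 (n - 3) T1res Hn : 0 <= T1stat n V f).
  pose proof (inv_INR_sumR_sq_nonneg n 1 (n - 3) T2res Hn : 0 <= T2stat n V f).
  lra.
Qed.

Lemma Vvar_le_residual_stats : (1 <= n)%nat ->
  Vvar n V <= 3 * (Tstat n V f + T1stat n V f + T2stat n V f) + 9 * B ^ 2 + 7 * M ^ 2 / INR n.
Proof.
  intros Hn; assert (HN : 0 < INR n) by (apply lt_0_INR; lia).
  pose proof (pow2_ge_0 B); pose proof (pow2_ge_0 M).
  destruct (Nat.le_gt_cases 3 n) as [Hlarge | Hsmall].
  - pose proof (sumR_centred_sq_last (Wbar n V + d2bar n f) ltac:(lia)).
    pose proof sumR_centred_sq_le; set (c := Wbar n V + d2bar n f) in *.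
    pose proof (sumR_dV_sq_last2 Hlarge); pose proof sumR_dV_sq_le.
    set (sT := sumR 1 (n - 1) (fun i => Tres i ^ 2)) in *.
    set (sT1 := sumR 1 (n - 3) (fun i => T1res i ^ 2)) in *.
    set (sT2 := sumR 1 (n - 3) (fun i => T2res i ^ 2)) in *.
    assert (0 <= sT /\ 0 <= sT1 /\ 0 <= sT2) as (? & ? & ?)
      by (repeat split; apply sumR_nonneg; intros; apply pow2_ge_0).
    change (Tstat n V f) with (/ INR n * sT).
    change (T1stat n V f) with (/ INR n * sT1).
    change (T2stat n V f) with (/ INR n * sT2).
    apply Rmult_le_reg_l with (INR n); [exact HN |].
    replace (INR n * (3 * (/ INR n * sT + / INR n * sT1 + / INR n * sT2)
                      + 9 * B ^ 2 + 7 * M ^ 2 / INR n))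
      with (3 * (sT + sT1 + sT2) + 9 * (INR n * B ^ 2) + 7 * M ^ 2) by (field; lra).
    eapply Rle_trans; [apply (INR_mul_Vvar_le n V (c / 2) Hn) |].
    rewrite (sumR_ext 1 n _ (fun i => / 4 * (2 * V i - c) ^ 2)) by (intros; field).
    rewrite sumR_mult_l; lra.
  - pose proof (Vvar_le_sq n V M Hn HV); pose proof (residual_stats_nonneg Hn).
    assert (INR n <= 2) by (replace 2 with (INR 2) by (simpl; ring); apply le_INR; lia).
    assert (M ^ 2 <= 7 * M ^ 2 / INR n).
    { apply Rmult_le_reg_r with (INR n); [exact HN |].
      replace (7 * M ^ 2 / INR n * INR n) with (7 * M ^ 2) by (field; lra); nra. }
    nra.
Qed.

End Variance_bound.

Theorem proposition4p2 (alpha M : R) (Halpha : 0 < alpha) (HM : 0 < M) :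
  exists C : R, 0 < C /\
    forall (n : nat) (V : nat -> R) (f : R -> R),
      (1 <= n)%nat ->
      (forall i, (1 <= i <= n)%nat -> 0 <= V i <= M) ->
      Holder alpha M f ->
      Vvar n V <=
        C * (/ INR n + Rpower (INR n) (- (4 * Rmin alpha 1))
             + Tstat n V f + T1stat n V f + T2stat n V f).
Proof.
  set (a := Rmin alpha 1); set (c := 81 * (M + 1) ^ 4).
  assert (Hc : 0 <= c) by (apply Rmult_le_pos; [lra | apply pow_le; lra]).
  set (C := 3 + 9 * c + 7 * M ^ 2).
  exists C; split; [unfold C; pose proof (pow2_ge_0 M); lra |].
  intros n V f Hn HV Hf.
  set (B := (3 * (M + 1) * Rpower (INR n) (- a)) ^ 2).
  set (P := Rpower (INR n) (- (4 * a))).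
  assert (HB : B ^ 2 = c * P).
  { unfold B, c, P; replace (- (4 * a)) with (- a + (- a + (- a + - a))) by ring.
    rewrite !Rpower_plus; ring. }
  pose proof (Vvar_le_residual_stats n V f M B HV
    (fun i j => Holder_grid_increment alpha M f n i j Halpha (Rlt_le _ _ HM) Hf) Hn) as Hvar.
  rewrite HB in Hvar.
  pose proof (residual_stats_nonneg n V f Hn).
  assert (HP : 0 < P) by apply exp_pos.
  assert (HN : 0 < / INR n) by (apply Rinv_0_lt_compat, lt_0_INR; lia).
  pose proof (pow2_ge_0 M).
  assert (3 * (Tstat n V f + T1stat n V f + T2stat n V f)
          <= C * (Tstat n V f + T1stat n V f + T2stat n V f))
    by (apply Rmult_le_compat_r; unfold C; lra).
  assert (9 * (c * P) <= C * P)
    by (rewrite <- Rmult_assoc; apply Rmult_le_compat_r; unfold C; lra).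
  assert (7 * M ^ 2 / INR n <= C * / INR n) by (apply Rmult_le_compat_r; unfold C; lra).
  lra.
Qed.
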